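(* Let $D=(V,A)$ be a digraph with minimum in-degree at least 1, and let $\mathcal{L}D=\mathcal{L}_{(A',\phi)}D$ be a partial line digraph of $D$. Then $\mathcal{L}D$ has a nonempty semikernel if and only if $D$ has a nonempty semikernel.
   Context: Digraphs are loopless and without multiple arcs. For $U\subseteq V$, $\omega^-(U)=\{(x,y)\in A: y\in U,\ x\notin U\}$ and $\omega^+(U)=\{(x,y)\in A: x\in U,\ y\notin U\}$; for a vertex $j$, $\omega^-(j)$ is the set of arcs with terminal vertex $j$. For a set of arcs $\Omega$, $H(\Omega)=\{y:(x,y)\in\Omega\}$. The arc $(x,y)$ is also written $xy$. Partial line digraph: given $D=(V,A)$ with minimum in-degree at least 1, take an arc subset $A'\subseteq A$ and a surjective map $\phi:A\to A'$ such that (i) $H(A')=V$; (ii) $\phi$ restricted to $A'$ is the identity, and for every vertex $j\in V$, $\phi(\omega^-(j))\subseteq\omega^-(j)\cap A'$. The partial line digraph $\mathcal{L}_{(A',\phi)}D$ has vertex set $A'$ and arc set $\{(ij,\phi(j,k)) : ij\in A',\ (j,k)\in A\}$. A semikernel of a digraph is an independent vertex set $S$ (no arc joins two vertices of $S$) such that for every arc $(s,x)\in\omega^+(S)$ there is an arc $(x,s')\in\omega^-(S)$. *)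

From mathcomp Require Import all_boot.
Set Implicit Arguments. Unset Strict Implicit. Unset Printing Implicit Defensive.

(* A digraph on a finite vertex type T is given by its arc relation r : rel T
   (no multiple arcs by construction; looplessness is an explicit hypothesis). *)

Definition independent (T : finType) (r : rel T) (S : {set T}) : Prop :=
  forall x y, x \in S -> y \in S -> ~~ r x y.

Definition semikernel (T : finType) (r : rel T) (S : {set T}) : Prop :=
  independent r S /\
  forall s x, s \in S -> x \notin S -> r s x -> exists2 s', s' \in S & r x s'.

Definition has_nonempty_semikernel (T : finType) (r : rel T) : Prop :=
  exists S : {set T}, S != set0 /\ semikernel r S.

Definition min_indeg_ge1 (V : finType) (arc : rel V) : Prop :=
  forall j, exists i, arc i j.

(* (A', phi) defines a partial line digraph of D = (V, arc).  Arcs are pairs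
   (x,y) with arc x y; A' : {set V * V}; phi is given as a total function on
   V * V, only its values on arcs of D matter. *)
Definition partial_line_data (V : finType) (arc : rel V)
    (A' : {set V * V}) (phi : V * V -> V * V) : Prop :=
  [/\
      (forall a, a \in A' -> arc a.1 a.2),
      (forall b, b \in A' -> exists2 a : V * V, arc a.1 a.2 & phi a = b),
      (forall v, exists u, (u, v) \in A'),
      (forall a, a \in A' -> phi a = a) &
      (forall i j, arc i j -> phi (i, j) \in A' /\ (phi (i, j)).2 = j)].

Definition pld_vertex (V : finType) (A' : {set V * V}) : finType :=
  {a : V * V | a \in A'}.

Definition pld_arc (V : finType) (arc : rel V) (A' : {set V * V})
    (phi : V * V -> V * V) : rel (pld_vertex A') :=
  fun a b => [exists k : V, arc (val a).2 k && (phi ((val a).2, k) == val b)].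
Arguments pld_arc {V} arc A' phi.

From mathcomp Require Import all_boot.

(* The head map ij |-> j from the partial line digraph LD to D preserves arcs,
   every arc of D leaving the head of a vertex lifts to an arc of LD, and the
   out-neighbourhood of a vertex of LD depends only on its head.  Hence the
   preimage of a semikernel of D is a semikernel of LD and the image of a
   semikernel of LD is a semikernel of D; condition (i), H(A') = V, keeps the
   preimage of a nonempty set nonempty. *)

Definition pld_head {V : finType} {A' : {set V * V}} (a : pld_vertex A') : V :=
  (val a).2.

Section PartialLineDigraph.

Variables (V : finType) (arc : rel V) (A' : {set V * V}) (phi : V * V -> V * V).
Hypothesis phi_in : forall i j, arc i j -> phi (i, j) \in A' /\ (phi (i, j)).2 = j.

Local Notation L := (pld_arc arc A' phi).
Local Notation head := (@pld_head V A').

Lemma pld_arc_head {a b} : L a b -> arc (head a) (head b).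
Proof.
case/existsP=> k /andP[ak /eqP phi_b].
by rewrite /pld_head -phi_b (proj2 (phi_in _ _ ak)).
Qed.

Lemma pld_arc_lift {a k} : arc (head a) k -> exists2 b, L a b & head b = k.
Proof.
move=> ak; have [phiA' phi_k] := phi_in _ _ ak.
exists (exist _ (phi (head a, k)) phiA') => //.
by apply/existsP; exists k; rewrite ak /=.
Qed.

Lemma pld_arc_eq_head {a a'} b : head a = head a' -> L a b = L a' b.
Proof. by rewrite /pld_arc /pld_head => ->. Qed.

Lemma semikernel_preimage_head (S : {set V}) :
  semikernel arc S -> semikernel L [set a | head a \in S].
Proof.
case=> indS absS; split=> [a b | a b]; rewrite !inE.
  move=> aS bS; apply/negP => /pld_arc_head.
  exact/negP/indS.
move=> aS bS /pld_arc_head ab.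
have [s sS bs] := absS _ _ aS bS ab.
have [c bc cs] := pld_arc_lift bs.
by exists c; rewrite // inE cs.
Qed.

Lemma semikernel_image_head (S : {set pld_vertex A'}) :
  semikernel L S -> semikernel arc (head @: S).
Proof.
case=> indS absS; split=> [x y | x y].
  move=> /imsetP[a aS ->] /imsetP[b bS ->]; apply/negP => /pld_arc_lift[c ac cb].
  have [cS | cNS] := boolP (c \in S); first by case/negP: (indS _ _ aS cS).
  have [s sS cs] := absS _ _ aS cNS ac.
  by case/negP: (indS _ _ bS sS); rewrite -(pld_arc_eq_head s cb).
move=> /imsetP[a aS ->] xNS /pld_arc_lift[c ac cx].
have cNS : c \notin S by apply: contra xNS => cS; rewrite -cx imset_f.
have [s sS cs] := absS _ _ aS cNS ac.
by exists (head s); [rewrite imset_f | rewrite -cx; apply: pld_arc_head].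
Qed.

End PartialLineDigraph.

Theorem theorem2p7 (V : finType) (arc : rel V) (A' : {set V * V})
    (phi : V * V -> V * V) :
  irreflexive arc ->
  min_indeg_ge1 arc ->
  partial_line_data arc A' phi ->
  (has_nonempty_semikernel (pld_arc arc A' phi) <-> has_nonempty_semikernel arc).
Proof.
move=> _ _ [_ _ head_onto _ phi_in]; split.
- case=> S [S_ne skS]; exists (pld_head @: S); split.
    by rewrite imset_eq0.
  exact: semikernel_image_head phi_in _ skS.
- case=> S [/set0Pn[v vS] skS]; exists [set a | pld_head a \in S]; split.
    have [u uvA'] := head_onto v.
    by apply/set0Pn; exists (exist _ (u, v) uvA'); rewrite inE.
  exact: semikernel_preimage_head phi_in _ skS.
Qed.
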